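(* Let $(D,\Sigma)$ be a tropical linear series of rank $r$ on a metric graph $\Gamma$, and let $M$ be its local array at a point $v$ of valence $d\ge2$ (with tangent vectors ordered $\eta_1,\dots,\eta_d$). Then $M$ satisfies (P2'): for any distinct $i,j\in\{1,\dots,d\}$ and every pair of integers $r_i,r_j\ge0$ with $r_i+r_j=r$, there exist $\mathbf z,\mathbf w_1,\dots,\mathbf w_{r_i},\mathbf u_1,\dots,\mathbf u_{r_j}\in M$ such that (a) $w_{1,i}<w_{2,i}<\dots<w_{r_i,i}<z_i$; (b) $u_{1,j}<u_{2,j}<\dots<u_{r_j,j}<z_j$; (c) $u_{k,j}<w_{k',j}$ for all $1\le k\le r_j$ and $1\le k'\le r_i$. Here $w_{k,i}$ denotes the $i$-th coordinate of $\mathbf w_k$, and similarly for the others.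
   Context: A metric graph is obtained from a finite connected graph by identifying each edge with a closed interval of positive length. $T_v(\Gamma)$ is the set of outgoing tangent directions and the valence is $|T_v(\Gamma)|$. $\mathrm{sl}_\eta(f)$ is the outgoing slope of a continuous piecewise linear integer-slope function. We set $\mathrm{div}(f)=\sum_v(-\sum_{\eta\in T_v}\mathrm{sl}_\eta(f))v$ and $R(D)=\{f:D+\mathrm{div}(f)\ge0\}$ for a divisor $D$. A tropical linear series of rank $r$ is $(D,\Sigma)$ with $\Sigma\subseteq R(D)$ a finitely generated tropical submodule (closed under $\min\{f_i+a_i\}$, $a_i\in\mathbb R$) such that: (1) every effective divisor $E$ of degree $r$ admits $f\in\Sigma$ with $\mathrm{div}(f)+D\ge E$; (2) every $r+2$ functions of $\Sigma$ are tropically dependent (some $\min_i(f_i+a_i)$ is attained at least twice at every point). For such a series every slope set $\{\mathrm{sl}_\eta(f):f\in\Sigma\}$ has exactly $r+1$ elements $s_\eta[0]<\dots<s_\eta[r]$. The local array at $v$ is $M=\{\mathbf x\in[r]^d:\exists f\in\Sigma,\ \mathrm{sl}_{\eta_i}(f)=s_{\eta_i}[x_i]\ \forall i\}$, where $[r]=\{0,\dots,r\}$. *)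

From HB Require Import structures.
From mathcomp Require Import all_boot all_order all_algebra.
From mathcomp Require Import reals.
Set Implicit Arguments. Unset Strict Implicit. Unset Printing Implicit Defensive.
Import Order.TTheory GRing.Theory Num.Theory.
Local Open Scope ring_scope.

(* A metric graph: a finite connected graph (loops and multiple edges
   allowed) with each edge e identified with the interval [0, len e],
   parameter 0 at src e and parameter len e at tgt e. *)
Record mgraph (R : realType) := MGraph {
  mg_V : finType;
  mg_E : finType;
  mg_src : mg_E -> mg_V;
  mg_tgt : mg_E -> mg_V;
  mg_len : mg_E -> R;
  mg_len_gt0 : forall e, 0 < mg_len e;
  mg_connected : forall u w : mg_V,
    connect (fun a b : mg_V => [exists e, ((mg_src e == a) && (mg_tgt e == b))
                                     || ((mg_src e == b) && (mg_tgt e == a))]) u w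
}.

Arguments mg_src {R} m _ : rename.
Arguments mg_tgt {R} m _ : rename.
Arguments mg_len {R} m _ : rename.

Section MetricGraph.
Variables (R : realType) (G : mgraph R).

(* Points: a vertex [inl v], or an interior point [inr (e, t)] with
   0 < t < len e (other [inr] values are junk, excluded by [valid]). *)
Definition gpt := (mg_V G + (mg_E G * R))%type.

Definition valid (p : gpt) : bool :=
  match p with
  | inl _ => true
  | inr (e, t) => (0 < t) && (t < mg_len G e)
  end.

(* Tangent directions: (e, false) = along e in the direction of increasing
   parameter, (e, true) = along e in the direction of decreasing parameter. *)
Definition dir := (mg_E G * bool)%type.

Definition tdir (p : gpt) : pred dir := fun eta =>
  match p with
  | inl v => if eta.2 then mg_tgt G eta.1 == v else mg_src G eta.1 == v
  | inr (e, _) => eta.1 == e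
  end.

Definition valence (p : gpt) : nat := #|[pred eta | tdir p eta]|.

(* Real-valued functions on Gamma (only values at valid points matter). *)
Definition tfun := gpt -> R.

Definition edgev (f : tfun) (e : mg_E G) (t : R) : R :=
  if t == 0 then f (inl (mg_src G e))
  else if t == mg_len G e then f (inl (mg_tgt G e))
  else f (inr (e, t)).

(* the parameter (on edge eta.1) of the point p from which eta emanates *)
Definition bpar (p : gpt) (eta : dir) : R :=
  match p with
  | inl _ => if eta.2 then mg_len G eta.1 else 0
  | inr (_, t) => t
  end.

Definition has_slope (f : tfun) (p : gpt) (eta : dir) (s : int) : Prop :=
  exists2 eps : R, 0 < eps &
    forall h : R, 0 < h -> h < eps ->
      edgev f eta.1 (bpar p eta + (if eta.2 then - h else h))
      = edgev f eta.1 (bpar p eta) + s%:~R * h.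

Definition is_PL (f : tfun) : Prop :=
  forall e : mg_E G, exists (n : nat) (a : nat -> R) (s : nat -> int),
    [/\ a 0%N = 0, a n = mg_len G e,
        (forall k, (k < n)%N -> a k < a k.+1) &
        forall k t, (k < n)%N -> a k <= t <= a k.+1 ->
          edgev f e t = edgev f e (a k) + (s k)%:~R * (t - a k)].

Definition div_at (f : tfun) (p : gpt) (k : int) : Prop :=
  exists s : dir -> int,
    (forall eta, tdir p eta -> has_slope f p eta (s eta)) /\
    k = - \sum_(eta | tdir p eta) s eta.

Definition divisor := gpt -> int.

Definition is_divisor (D : divisor) : Prop :=
  exists l : seq gpt, forall p, valid p -> D p != 0 -> p \in l.

Definition in_RD (D : divisor) (f : tfun) : Prop :=
  is_PL f /\ forall p, valid p -> exists2 k, div_at f p k & 0 <= D p + k.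

Definition agree (f g : tfun) : Prop := forall p, valid p -> f p = g p.

Definition tcomb (n : nat) (g : 'I_n.+1 -> tfun) (a : 'I_n.+1 -> R) : tfun :=
  fun p => \big[Order.min/(g ord0 p + a ord0)]_(i < n.+1) (g i p + a i).

Definition fg_tsubmodule (S : tfun -> Prop) : Prop :=
  exists (n : nat) (g : 'I_n.+1 -> tfun),
    (forall i, S (g i)) /\
    forall f, S f <-> exists a : 'I_n.+1 -> R, agree f (tcomb g a).

(* multiplicity at p of the effective divisor ps_1 + ... + ps_r *)
Definition mult (r : nat) (ps : 'I_r -> gpt) (p : gpt) : nat :=
  (\sum_(i < r) (ps i == p))%N.

Definition tdependent (m : nat) (f : 'I_m -> tfun) : Prop :=
  exists a : 'I_m -> R, forall p, valid p ->
    exists i j : 'I_m, [/\ i != j,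
      (forall k, f i p + a i <= f k p + a k) &
      f j p + a j = f i p + a i].

Definition tls (D : divisor) (S : tfun -> Prop) (r : nat) : Prop :=
  [/\ is_divisor D,
      fg_tsubmodule S,
      (forall f, S f -> in_RD D f),
      (forall ps : 'I_r -> gpt, (forall i, valid (ps i)) ->
         exists2 f, S f & forall p, valid p ->
           exists2 k, div_at f p k & ((mult ps p)%:Z <= D p + k)) &
      (forall f : 'I_(r + 2) -> tfun, (forall i, S (f i)) -> tdependent f)].

Definition slopeset (S : tfun -> Prop) (p : gpt) (eta : dir) : int -> Prop :=
  fun s => exists2 f, S f & has_slope f p eta s.

(* s = s_eta[k]: s is the k-th smallest element (from 0) of the set SS *)
Definition kth (SS : int -> Prop) (k : nat) (s : int) : Prop :=
  SS s /\ exists l : seq int,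
    [/\ uniq l, size l = k & forall t, t \in l <-> (SS t /\ t < s)].

Definition local_array (S : tfun -> Prop) (r : nat) (p : gpt) (d : nat)
    (eta : 'I_d -> dir) (x : 'I_d -> 'I_r.+1) : Prop :=
  exists2 f, S f & forall i, exists2 s, has_slope f p (eta i) s &
    kth (slopeset S p (eta i)) (x i) s.

End MetricGraph.

Arguments local_array {R G} S r p {d} eta x.

Definition P2' (r d : nat) (M : ('I_d -> 'I_r.+1) -> Prop) : Prop :=
  forall i j : 'I_d, i != j -> forall ri rj : nat, (ri + rj)%N = r ->
    exists (z : 'I_d -> 'I_r.+1) (w : 'I_ri -> 'I_d -> 'I_r.+1)
           (u : 'I_rj -> 'I_d -> 'I_r.+1),
      [/\ M z /\ (forall k, M (w k)) /\ (forall k, M (u k)),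
          ((forall k k' : 'I_ri, (k < k')%N -> (w k i < w k' i)%N)
                    /\ (forall k, (w k i < z i)%N)),
          ((forall k k' : 'I_rj, (k < k')%N -> (u k j < u k' j)%N)
                    /\ (forall k, (u k j < z j)%N)) &
          forall (k : 'I_rj) (k' : 'I_ri), (u k j < w k' j)%N].

(* Write Sigma as the tropical span of generators g_m.  Near v every g_m is
   linear along each tangent direction, so along a direction every
   f = min_m (g_m + a_m) in Sigma is the lower envelope of finitely many lines,
   and the slope set is the set of slopes of the generators.  Put r_i points on
   eta_i and r_j points on eta_j close to v, those on eta_i much closer than
   those on eta_j, and use (1) to get f in Sigma whose divisor is positive at
   all of them.  At each point the envelope has a kink, and the generator whose
   line leaves the envelope there gives w_k (resp. u_k); z is the slope vector
   of f.  Slopes of the leaving lines decrease away from v, giving (a) and (b).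
   A generator leaving on eta_i near v is almost minimal at v, whereas one
   leaving on eta_j at distance y exceeds the minimum at v by at least y; so
   along eta_j the former is the steeper one, which is (c). *)

From HB Require Import structures.
From mathcomp Require Import all_boot all_order all_algebra.
From mathcomp Require Import reals boolp.
From mathcomp Require Import ring lra zify.
Set Implicit Arguments. Unset Strict Implicit. Unset Printing Implicit Defensive.
Import Order.TTheory GRing.Theory Num.Theory.
Local Open Scope ring_scope.

Lemma no_finite_point_cover (R : realType) (T : finType) (eps : R)
    (P : T -> R -> Prop) :
  0 < eps -> (forall m h h', P m h -> P m h' -> h = h') ->
  ~ (forall h, 0 < h -> h < eps -> exists m, P m h).
Proof.
move=> e0 uni cover.
pose hs (t : 'I_(#|T|.+1)) : R := eps / (t.+2)%:R.
have hsP t : 0 < hs t /\ hs t < eps.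
  split; first by rewrite divr_gt0 // ltr0n.
  by rewrite /hs ltr_pdivrMr ?ltr0n // ltr_pMr // ltr1n.
have [f Hf] := choice (fun t => cover (hs t) (proj1 (hsP t)) (proj2 (hsP t))).
suff inj_f : injective f by have := leq_card f inj_f; rewrite !card_ord ltnn.
move=> t t' ftt'; have := Hf t; rewrite ftt' => /(uni _ _ _)/(_ (Hf t')).
rewrite /hs => /(mulfI (lt0r_neq0 e0)) /invr_inj/eqP.
by rewrite eqr_nat => /eqP [] /val_inj.
Qed.

Lemma uniform_radius (R : realType) (T : finType) (Q : T -> R -> Prop) :
  (forall t, exists2 e, 0 < e & Q t e) ->
  (forall t e e', Q t e -> 0 < e' -> e' <= e -> Q t e') ->
  exists2 e, 0 < e & forall t, Q t e.
Proof.
move=> ex dn.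
suff [e e0 He] : exists2 e, 0 < e & forall t, t \in enum T -> Q t e.
  by exists e => // t; apply: He; rewrite mem_enum.
elim: (enum T) => [|a s [e e0 He]]; first by exists 1.
have [e' e'0 He'] := ex a.
have m0 : 0 < Order.min e e' by rewrite lt_min e0 e'0.
exists (Order.min e e') => // t; rewrite inE => /orP [/eqP ->|ts].
  by apply: dn He' _ _; rewrite // ge_min lexx orbT.
by apply: dn (He t ts) _ _; rewrite // ge_min lexx.
Qed.

Lemma bounded_choice (T : Type) (t0 : T) (N : nat) (P : nat -> T -> Prop) :
  (forall k, (k < N)%N -> exists t, P k t) ->
  exists F : nat -> T, forall k, (k < N)%N -> P k (F k).
Proof.
move=> ex; have /choice [F HF] : forall k, exists t, (k < N)%N -> P k t.
  by move=> k; case: (ltnP k N) => [/ex [t Pt]|_]; [exists t|exists t0].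
by exists F.
Qed.

Lemma harmonic_pt_bounds (R : realType) (h : R) k : 0 < h -> 0 < h / k.+2%:R < h.
Proof.
move=> h0; rewrite divr_gt0 ?ltr0n //=.
by rewrite ltr_pdivrMr ?ltr0n // ltr_pMr // ltr1n.
Qed.

Lemma harmonic_pt_decr (R : realType) (h : R) k k' : 0 < h -> (k < k')%N ->
  h / k'.+2%:R < h / k.+2%:R.
Proof. by move=> h0 kk; rewrite ltr_pM2l // ltf_pV2 ?posrE ?ltr0n // ltr_nat. Qed.

Lemma harmonic_pt_ge (R : realType) (h : R) k N : 0 < h -> (k < N)%N ->
  h / N.+1%:R <= h / k.+2%:R.
Proof. by move=> h0 kN; rewrite ler_pM2l // lef_pV2 ?posrE ?ltr0n // ler_nat. Qed.

Lemma sample_points (R : realType) (C ex ey : R) (M : nat) :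
  0 <= C -> 0 < ex -> 0 < ey -> exists x y : nat -> R,
  [/\ forall k, 0 < x k < ex, forall k, 0 < y k < ey,
      forall k k', (k < k')%N -> x k' < x k,
      forall k k', (k < k')%N -> y k' < y k &
      forall k k', (k' < M)%N -> 2 * C * x k < y k'].
Proof.
move=> C0 ex0 ey0; pose b := ey / M.+1%:R; pose X := Order.min ex (b / (2 * C + 1)).
have b0 : 0 < b by rewrite divr_gt0 ?ltr0n.
have bC : b / (2 * C + 1) * (2 * C + 1) = b by rewrite mulfVK //; lra.
have X0 : 0 < X by rewrite lt_min ex0 divr_gt0 //; lra.
exists (fun k => X / k.+2%:R), (fun k => ey / k.+2%:R).
split=> [k|k|k k'|k k'|k k' k'M].
- have /andP [-> x1] := harmonic_pt_bounds k X0.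
  by rewrite (lt_le_trans x1) // ge_min lexx.
- exact: harmonic_pt_bounds.
- exact: harmonic_pt_decr.
- exact: harmonic_pt_decr.
have /andP [x0 x1] := harmonic_pt_bounds k X0.
have Xb : X <= b / (2 * C + 1) by rewrite ge_min lexx orbT.
have yb := harmonic_pt_ge ey0 k'M; rewrite -/b in yb.
move: (b / _) (X / _) (ey / _) bC Xb x0 x1 yb => q xk yk bC Xb x0 x1 yb.
have : 0 <= C * (q - xk) by apply: mulr_ge0; lra.
nra.
Qed.

Definition rank_below (V : seq int) (s : int) : nat := size [seq v <- V | v < s].

Lemma uniq_rank_below (V : seq int) (s : int) :
  uniq V -> uniq (s :: [seq v <- V | v < s]).
Proof. by move=> uV; rewrite /= mem_filter ltxx filter_uniq. Qed.

Lemma rank_below_lt (V : seq int) (s s' : int) : uniq V -> s \in V -> s < s' ->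
  (rank_below V s < rank_below V s')%N.
Proof.
move=> uV sV ss'; apply: (uniq_leq_size (uniq_rank_below s uV)) => v.
rewrite inE !mem_filter => /orP [/eqP ->|/andP [vs ->]]; first by rewrite ss'.
by rewrite (lt_trans vs ss').
Qed.

Lemma rank_below_size (V : seq int) (s : int) : uniq V -> s \in V ->
  (rank_below V s < size V)%N.
Proof.
move=> uV sV; apply: (uniq_leq_size (uniq_rank_below s uV)) => v.
by rewrite inE mem_filter => /orP [/eqP ->|/andP [_ ->]].
Qed.

Lemma kth_rank_below (P : int -> Prop) (V : seq int) (s : int) : uniq V ->
  (forall t, P t <-> t \in V) -> s \in V -> kth P (rank_below V s) s.
Proof.
move=> uV PV sV; split; first exact/PV.
exists [seq v <- V | v < s]; split; rewrite ?filter_uniq // => t.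
by rewrite mem_filter PV; split=> [/andP [-> ->]|[-> ->]].
Qed.

Section Envelope.
Variables (R : realType) (T : finType) (c tau : T -> R) (F : R -> R).

Definition envelope (eps : R) : Prop :=
  forall h, 0 <= h -> h < eps ->
    (forall m, F h <= c m + tau m * h) /\ exists m, F h = c m + tau m * h.

Definition active (h : R) (m : T) : Prop := F h = c m + tau m * h.

Definition kink (h : R) (lo : T) : Prop :=
  active h lo /\ exists2 hi, active h hi & tau lo + 1 <= tau hi.

Variable eps : R.
Hypothesis env : envelope eps.

Lemma envelopeW eps' : eps' <= eps -> envelope eps'.
Proof. by move=> le h h0 h1; apply: env => //; apply: lt_le_trans le. Qed.

Lemma envelope_le m h : 0 <= h -> h < eps -> F h <= c m + tau m * h.
Proof. by move=> h0 h1; have [le _] := env h0 h1; apply: le. Qed.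

Lemma active_slope_antitone a b m m' : 0 <= a -> a < b -> b < eps ->
  active a m -> active b m' -> tau m' <= tau m.
Proof.
move=> a0 ab b1 Ea Eb.
have := envelope_le m' a0 (lt_trans ab b1).
have := envelope_le m (le_trans a0 (ltW ab)) b1.
rewrite Ea Eb => Hb Ha; rewrite leNgt; apply/negP => lt; nra.
Qed.

Lemma kink_slope_lt a b m lo : 0 <= a -> a < b -> b < eps ->
  active a m -> kink b lo -> tau lo < tau m.
Proof.
move=> a0 ab b1 Ea [_ [hi Ehi lohi]].
have := active_slope_antitone a0 ab b1 Ea Ehi; lra.
Qed.

Lemma kink_const_ge b lo : 0 <= b -> b < eps -> kink b lo -> F 0 + b <= c lo.
Proof.
move=> b0 b1 [Elo [hi Ehi lohi]].
have := envelope_le hi (lexx 0) (le_lt_trans b0 b1); rewrite mulr0 addr0 => le0.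
have : 0 <= (tau hi - tau lo - 1) * b by apply: mulr_ge0; lra.
move: Elo Ehi; rewrite /active; nra.
Qed.

Lemma active_const_le x m0 m : 0 <= x -> x < eps ->
  active 0 m0 -> active x m -> c m <= F 0 + (tau m0 - tau m) * x.
Proof.
move=> x0 x1; rewrite /active mulr0 addr0 => E0 Ex.
have := envelope_le m0 x0 x1; rewrite -E0 Ex; lra.
Qed.

Lemma active_slope_lt y m m' : 0 < y -> y < eps ->
  active y m' -> c m < c m' -> tau m' < tau m.
Proof.
move=> y0 y1 Ey cc; have := envelope_le m (ltW y0) y1; rewrite Ey => le.
rewrite ltNge; apply/negP => H; nra.
Qed.

(* The slope of the envelope at the origin is the slope of some line through
   [(0, F 0)]: otherwise each of the finitely many lines would meet the graph
   of [F] at most once on [(0, eps)]. *)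
Lemma envelope_slope s : 0 < eps ->
  (forall h, 0 < h -> h < eps -> F h = F 0 + s * h) ->
  exists m, active 0 m /\ tau m = s.
Proof.
move=> e0 slope; apply: contrapT => none.
apply: (@no_finite_point_cover R T eps
  (fun m h => c m + tau m * h = F 0 + s * h /\ tau m != s) e0).
- move=> m h h' [E1 ns] [E2 _].
  have : (tau m - s) * (h - h') = 0 by lra.
  by move/eqP; rewrite mulf_eq0 subr_eq0 (negbTE ns) subr_eq0 => /eqP.
move=> h h0 h1; have [_ [m Em]] := env (ltW h0) h1; exists m.
rewrite -slope // Em; split=> //; apply/eqP => ts; apply: none; exists m.
by split=> //; move: Em; rewrite /active slope // ts mulr0 addr0; lra.
Qed.

End Envelope.

Section EnvelopeShift.
Variables (R : realType) (T : finType) (c tau : T -> R) (F : R -> R) (eps : R).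
Hypothesis env : envelope c tau F eps.

Lemma envelope_shiftr h : 0 <= h ->
  envelope (fun m => c m + tau m * h) tau (fun t => F (h + t)) (eps - h).
Proof.
move=> h0 t t0 t1; have ht : h + t < eps by lra.
have [le [m E]] := env (addr_ge0 h0 t0) ht.
split; first by move=> m'; have := le m'; rewrite mulrDr addrA.
by exists m; rewrite E mulrDr addrA.
Qed.

Lemma envelope_shiftl h : h < eps ->
  envelope (fun m => c m + tau m * h) (fun m => - tau m) (fun t => F (h - t)) h.
Proof.
move=> h1 t t0 t1; have ht0 : 0 <= h - t by lra.
have ht1 : h - t < eps by lra.
have [le [m E]] := env ht0 ht1.
split; first by move=> m'; have := le m'; rewrite mulrBr; lra.
by exists m; rewrite E mulrBr; lra.
Qed.

(* [sf] and [sb] are the outgoing slopes of [F] at [h], so the last hypothesis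
   says that the divisor of [F] at [h] is positive. *)
Lemma envelope_kink h sf sb e1 e2 : 0 < h -> h < eps -> 0 < e1 -> 0 < e2 ->
  (forall t, 0 < t -> t < e1 -> F (h + t) = F h + sf * t) ->
  (forall t, 0 < t -> t < e2 -> F (h - t) = F h + sb * t) ->
  sf + sb + 1 <= 0 -> exists lo, kink c tau F h lo.
Proof.
move=> h0 h1 e10 e20 fwd bwd sum.
have envr : envelope (fun m => c m + tau m * h) tau (fun t => F (h + t))
    (Order.min e1 (eps - h)).
  by apply: (envelopeW (envelope_shiftr (ltW h0))); rewrite ge_min lexx orbT.
have envl : envelope (fun m => c m + tau m * h) (fun m => - tau m)
    (fun t => F (h - t)) (Order.min e2 h).
  by apply: (envelopeW (envelope_shiftl h1)); rewrite ge_min lexx orbT.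
have [|t t0|lo [Alo Tlo]] := envelope_slope (s := sf) envr.
- by rewrite lt_min e10 subr_gt0 h1.
- by rewrite lt_min addr0 => /andP[t1 _]; apply: fwd.
have [|t t0|hi [Ahi Thi]] := envelope_slope (s := sb) envl.
- by rewrite lt_min e20 h0.
- by rewrite lt_min subr0 => /andP[t1 _]; apply: bwd.
move: Alo Ahi; rewrite /active addr0 subr0 !mulr0 !addr0 => Alo Ahi.
by exists lo; split=> //; exists hi => //; lra.
Qed.

End EnvelopeShift.

(* The line [m], active at [x], lies within [2 C x] of the common minimum at
   the origin, while [m'], leaving at a kink at [y], lies at least [y] above it. *)
Lemma kink_cross (R : realType) (T : finType) (c ti tj : T -> R) (Fi Fj : R -> R)
    eps C x y m0 m m' :
  envelope c ti Fi eps -> envelope c tj Fj eps -> (forall m, `|ti m| <= C) ->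
  0 <= x -> x < eps -> 0 < y -> y < eps -> 2 * C * x < y ->
  active c ti Fi 0 m0 -> active c ti Fi x m -> kink c tj Fj y m' -> tj m' < tj m.
Proof.
move=> envi envj tiC x0 x1 y0 y1 xy A0 Ax Ky.
have [_ [m1 A1]] := envj 0 (lexx 0) (lt_trans y0 y1).
have Fij : Fi 0 = Fj 0.
  have := envelope_le envi m1 (lexx 0) (le_lt_trans x0 x1).
  have := envelope_le envj m0 (lexx 0) (lt_trans y0 y1).
  by move: A0 A1; rewrite /active !mulr0 !addr0 => <- <- ? ?; apply/le_anti/andP.
have cm := active_const_le envi x0 x1 A0 Ax.
have cm' := kink_const_ge envj (ltW y0) y1 Ky.
have := tiC m0; have := tiC m; rewrite !ler_norml => /andP[? ?] /andP[? ?].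
have : (ti m0 - ti m) * x <= 2 * C * x by rewrite ler_wpM2r //; lra.
move=> dx; apply: (active_slope_lt envj y0 y1 Ky.1); lra.
Qed.

Lemma tcomb_le (R : realType) (G : mgraph R) (n : nat) (g : 'I_n.+1 -> tfun G)
    (a : 'I_n.+1 -> R) q m :
  tcomb g a q <= g m q + a m.
Proof. exact: bigmin_le. Qed.

Lemma tcomb_attained (R : realType) (G : mgraph R) (n : nat)
    (g : 'I_n.+1 -> tfun G) (a : 'I_n.+1 -> R) q :
  exists m, tcomb g a q = g m q + a m.
Proof.
rewrite /tcomb; elim/big_ind: _ => [|x y [m ->] [m' ->]|m _]; first by exists ord0.
- by rewrite /Order.min; case: ifP => _; [exists m|exists m'].
by exists m.
Qed.

Section Ray.
Variables (R : realType) (G : mgraph R) (p : gpt G).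
Hypothesis vp : valid p.

Definition ray_par (et : dir G) (h : R) : R :=
  bpar p et + (if et.2 then - h else h).

Definition along (f : tfun G) (et : dir G) (h : R) : R :=
  edgev f et.1 (ray_par et h).

Definition ray_pt (et : dir G) (h : R) : gpt G := inr (et.1, ray_par et h).

(* [ray_pt et h] is a genuine point of the open edge for [0 < h < reach et]. *)
Definition reach (et : dir G) : R :=
  match p with
  | inl _ => mg_len G et.1
  | inr (_, t) => Order.min t (mg_len G et.1 - t)
  end.

Lemma reach_gt0 et : tdir p et -> 0 < reach et.
Proof.
rewrite /reach; case: p vp => [v|[e t]] /=; first by rewrite mg_len_gt0.
by move=> /andP [t0 tl] /eqP ->; rewrite lt_min t0 subr_gt0 tl.
Qed.

Lemma ray_par_in et h : tdir p et -> 0 < h -> h < reach et ->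
  0 < ray_par et h < mg_len G et.1.
Proof.
rewrite /ray_par /reach /bpar; case: p vp => [v|[e t]] /=.
  by move=> _ _ h0 hl; case: et.2; apply/andP; split; lra.
move=> /andP [t0 tl] /eqP E h0; rewrite lt_min E => /andP [h1 h2].
by case: et.2; apply/andP; split; lra.
Qed.

Lemma ray_pt_valid et h : tdir p et -> 0 < h -> h < reach et -> valid (ray_pt et h).
Proof. exact: ray_par_in. Qed.

Lemma along_ray_pt f et h : tdir p et -> 0 < h -> h < reach et ->
  along f et h = f (ray_pt et h).
Proof.
move=> te h0 h1; have /andP [a b] := ray_par_in te h0 h1.
by rewrite /along /edgev (gt_eqF a) (lt_eqF b).
Qed.

Lemma along0 f et : tdir p et -> along f et 0 = f p.
Proof.
rewrite /along /ray_par /edgev /bpar oppr0 if_same addr0.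
case: p vp => [v|[e t]] /=.
  move=> _; case: et.2 => /eqP <-; last by rewrite eqxx.
  by rewrite (gt_eqF (mg_len_gt0 _)) eqxx.
by move=> /andP [t0 tl] /eqP ->; rewrite (gt_eqF t0) (lt_eqF tl).
Qed.

Lemma ray_pt_inj et : injective (ray_pt et).
Proof. by move=> h h' [] /addrI; case: et.2 => //; apply: oppr_inj. Qed.

Lemma has_slope_along f et s : tdir p et -> has_slope f p et s ->
  exists2 e, 0 < e & forall h, 0 < h -> h < e -> along f et h = f p + s%:~R * h.
Proof.
move=> te [e e0 H]; exists e => // h h0 h1.
by rewrite -(along0 f te) /along /ray_par oppr0 if_same addr0 -H.
Qed.

Lemma has_slope_ray_pt f et h b s :
  has_slope f (ray_pt et h) (et.1, b) s ->
  exists2 e, 0 < e & forall t, 0 < t -> t < e ->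
    along f et (h + (if b == et.2 then t else - t)) = along f et h + s%:~R * t.
Proof.
case=> e e0 H; exists e => // t t0 t1; have := H t t0 t1.
rewrite /along /= => <-; clear H; congr edgev; rewrite /ray_par.
by case: b; case: et.2 => /=; ring.
Qed.

Lemma sum_tdir_ray_pt et h (s : dir G -> int) :
  \sum_(x | tdir (ray_pt et h) x) s x = s (et.1, false) + s (et.1, true).
Proof.
rewrite (bigD1 (et.1, false)) ?eqxx //= (bigD1 (et.1, true)) /=; last first.
  by rewrite xpair_eqE eqxx.
rewrite big1 ?addr0 // => -[x b] /=.
by case: b; rewrite !xpair_eqE; case: eqP; rewrite ?andbF ?andbT.
Qed.

End Ray.

Lemma ray_avoids (R : realType) (G : mgraph R) (p : gpt G) (l : seq (gpt G)) et :
  exists2 e : R, 0 < e & forall h, 0 < h -> h < e -> ray_pt p et h \notin l.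
Proof.
elim: l => [|q l [e e0 He]]; first by exists 1.
have [[h1 [h10 Eq]]|nE] := pselect (exists h, 0 < h /\ ray_pt p et h = q).
  exists (Order.min e h1); first by rewrite lt_min e0 h10.
  move=> h h0; rewrite lt_min => /andP [he hh1]; rewrite inE negb_or He // andbT.
  by apply: contraTneq hh1; rewrite -Eq => /ray_pt_inj ->; rewrite ltxx.
exists e => // h h0 he; rewrite inE negb_or He // andbT.
by apply/eqP => Eq; apply: nE; exists h.
Qed.

Lemma in_RD_slope (R : realType) (G : mgraph R) (D : divisor G) f p et :
  in_RD D f -> valid p -> tdir p et -> exists s, has_slope f p et s.
Proof.
by move=> [_ fD] vp te; have [K [s [Hs _]] _] := fD p vp; exists (s et); apply: Hs.
Qed.

Section Generators.
Variables (R : realType) (G : mgraph R) (p : gpt G) (n : nat).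
Variables (g : 'I_n.+1 -> tfun G) (et : dir G) (sg : 'I_n.+1 -> int) (eps : R).
Hypotheses (vp : valid p) (te : tdir p et) (eps_reach : eps <= reach p et).
Hypothesis linear_g : forall m h, 0 < h -> h < eps ->
  along p (g m) et h = g m p + (sg m)%:~R * h.

Local Notation offset a := (fun m => g m p + a m).
Local Notation slope := (fun m => (sg m)%:~R : R).

Lemma tcomb_envelope a f : agree f (tcomb g a) ->
  envelope (offset a) slope (along p f et) eps.
Proof.
move=> ag h; rewrite le_eqVlt => /orP [/eqP <-|h0] h1.
  rewrite along0 // ag //; split=> [m|]; first by rewrite mulr0 addr0 tcomb_le.
  by have [m ->] := tcomb_attained g a p; exists m; rewrite mulr0 addr0.
have hr : h < reach p et by apply: lt_le_trans eps_reach.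
have gE m : g m (ray_pt p et h) + a m = g m p + a m + (sg m)%:~R * h.
  by rewrite -(along_ray_pt vp _ te h0 hr) linear_g // addrAC.
rewrite (along_ray_pt vp _ te h0 hr) ag ?ray_pt_valid //.
split=> [m|]; first by rewrite -gE tcomb_le.
by have [m ->] := tcomb_attained g a (ray_pt p et h); exists m; rewrite gE.
Qed.

Lemma slope_tcomb a f s : 0 < eps -> agree f (tcomb g a) -> has_slope f p et s ->
  exists m, g m p + a m = f p /\ sg m = s.
Proof.
move=> e0 ag /(has_slope_along vp te) [e e_gt0 fs].
have env : envelope (offset a) slope (along p f et) (Order.min eps e).
  by apply: (envelopeW (tcomb_envelope ag)); rewrite ge_min lexx.
have [||m [Am /intr_inj Tm]] := envelope_slope (s := s%:~R) env.
- by rewrite lt_min e0 e_gt0.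
- by move=> h h0; rewrite lt_min => /andP[_ h1]; rewrite fs // along0.
by exists m; move: Am; rewrite /active mulr0 addr0 along0.
Qed.

Lemma kink_tcomb a f h K : agree f (tcomb g a) -> 0 < h -> h < eps ->
  div_at f (ray_pt p et h) K -> 1 <= K ->
  exists lo, kink (offset a) slope (along p f et) h lo.
Proof.
move=> ag h0 h1 [s [Hs ->]]; rewrite sum_tdir_ray_pt => K1.
have [e1 e10 fwd] := has_slope_ray_pt (Hs (et.1, et.2) (eqxx _)).
have [e2 e20 bwd] := has_slope_ray_pt (Hs (et.1, ~~ et.2) (eqxx _)).
apply: (envelope_kink (sf := (s (et.1, et.2))%:~R) (sb := (s (et.1, ~~ et.2))%:~R)
  (tcomb_envelope ag) h0 h1 e10 e20).
- by move=> t t0 t1; have := fwd t t0 t1; rewrite eqxx.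
- have negb_eq : (~~ et.2 == et.2) = false by case: (et.2).
  by move=> t t0 t1; have := bwd t t0 t1; rewrite negb_eq.
have : s (et.1, et.2) + s (et.1, ~~ et.2) + 1 <= 0 by case: et K1 => e [] /=; lia.
by rewrite -(ler_int R) !intrD.
Qed.

End Generators.

Section LocalArray.
Variables (R : realType) (G : mgraph R) (D : divisor G) (S : tfun G -> Prop).
Variables (r : nat) (p : gpt G) (d : nat) (eta : 'I_d -> dir G).
Variables (l : seq (gpt G)) (n : nat) (g : 'I_n.+1 -> tfun G).
Variables (sg : 'I_d -> 'I_n.+1 -> int) (eps : R).
Hypotheses (vp : valid p) (tdp : forall k, tdir p (eta k)).
Hypothesis D_supp : forall q, valid q -> D q != 0 -> q \in l.
Hypothesis gS : forall m, S (g m).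
Hypothesis Sg : forall f, S f <-> exists a, agree f (tcomb g a).
Hypothesis S_RD : forall f, S f -> in_RD D f.
Hypothesis S_rank : forall ps : 'I_r -> gpt G, (forall t, valid (ps t)) ->
  exists2 f, S f & forall q, valid q ->
    exists2 K, div_at f q K & (mult ps q)%:Z <= D q + K.
Hypothesis S_dep : forall f : 'I_(r + 2) -> tfun G,
  (forall t, S (f t)) -> tdependent f.
Hypothesis slope_g : forall k m, has_slope (g m) p (eta k) (sg k m).
Hypotheses (eps_gt0 : 0 < eps) (eps_reach : forall k, eps <= reach p (eta k)).
Hypothesis linear_g : forall k m h, 0 < h -> h < eps ->
  along p (g m) (eta k) h = g m p + (sg k m)%:~R * h.

Local Notation offset a := (fun m => g m p + a m).
Local Notation slope k := (fun m => (sg k m)%:~R : R).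
Local Notation kink_along a f k := (kink (offset a) (slope k) (along p f (eta k))).
Local Notation active_along a f k :=
  (active (offset a) (slope k) (along p f (eta k))).

Lemma tcomb_envelope_eta k a f : agree f (tcomb g a) ->
  envelope (offset a) (slope k) (along p f (eta k)) eps.
Proof. exact: (tcomb_envelope vp (tdp k) (eps_reach k) (linear_g k)). Qed.

Lemma active_at_p k a f s : agree f (tcomb g a) -> has_slope f p (eta k) s ->
  exists m, active_along a f k 0 m /\ sg k m = s.
Proof.
move=> ag fs.
have [m [Am Tm]] := slope_tcomb vp (tdp k) (eps_reach k) (linear_g k) eps_gt0 ag fs.
by exists m; rewrite /active mulr0 addr0 along0.
Qed.

Definition slopes k : seq int := undup [seq sg k m | m <- enum 'I_n.+1].

Lemma mem_slopes k m : sg k m \in slopes k.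
Proof. by rewrite mem_undup; apply: map_f; rewrite mem_enum. Qed.

Lemma slopeset_slopes k t : slopeset S p (eta k) t <-> t \in slopes k.
Proof.
split=> [[f /Sg [a ag] fs]|].
  have [m [_ <-]] := slope_tcomb vp (tdp k) (eps_reach k) (linear_g k) eps_gt0 ag fs.
  exact: mem_slopes.
by rewrite mem_undup => /mapP [m _ ->]; exists (g m).
Qed.

Lemma has_slope_slopes k f s : S f -> has_slope f p (eta k) s -> s \in slopes k.
Proof. by move=> Sf fs; apply/slopeset_slopes; exists f. Qed.

(* Generators with [r + 2] distinct slopes would be tropically dependent,
   so along [eta k] two of their distinct lines would tie at every point. *)
Lemma size_slopes k : (size (slopes k) <= r.+1)%N.
Proof.
rewrite leqNgt; apply/negP => big.
have nthV (t : 'I_(r + 2)) : nth 0 (slopes k) t \in slopes k.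
  by rewrite mem_nth // (leq_trans (ltn_ord t)) // addn2.
have /all_sig [mt mtP] : forall t : 'I_(r + 2),
    {m | sg k m = nth 0 (slopes k) t}.
  move=> t; apply: cid; move: (nthV t); rewrite mem_undup => /mapP [m _ ->].
  by exists m.
have [a Ha] := S_dep (fun t => gS (mt t)).
apply: (@no_finite_point_cover R _ eps (fun ij h => ij.1 != ij.2 /\
  g (mt ij.1) p + a ij.1 + (sg k (mt ij.1))%:~R * h =
  g (mt ij.2) p + a ij.2 + (sg k (mt ij.2))%:~R * h) eps_gt0).
- move=> [i j] h h' /= [ij E1] [_ E2].
  have : ((sg k (mt i))%:~R - (sg k (mt j))%:~R) * (h - h') = 0 :> R by lra.
  move/eqP; rewrite mulf_eq0 subr_eq0 eqr_int !mtP subr_eq0 => /orP [|/eqP //].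
  rewrite nth_uniq ?undup_uniq ?(leq_trans (ltn_ord _)) ?addn2 //.
  by move=> /eqP/val_inj ij'; rewrite ij' eqxx in ij.
move=> h h0 h1; have hr : h < reach p (eta k) by apply: lt_le_trans (eps_reach k).
have [i [j [ij _ Hij]]] := Ha _ (ray_pt_valid vp (tdp k) h0 hr).
exists (i, j); split=> //=; move: Hij.
by rewrite -!(along_ray_pt vp _ (tdp k) h0 hr) !linear_g //; lra.
Qed.

Lemma rank_below_slopes k s : s \in slopes k ->
  (rank_below (slopes k) s < r.+1)%N.
Proof.
by move=> sV; apply: leq_trans (size_slopes k); rewrite rank_below_size ?undup_uniq.
Qed.

Definition slope_vec (sl : 'I_d -> int) : 'I_d -> 'I_r.+1 :=
  fun k => inord (rank_below (slopes k) (sl k)).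

Lemma slope_vec_local_array f sl : S f ->
  (forall k, has_slope f p (eta k) (sl k)) -> local_array S r p eta (slope_vec sl).
Proof.
move=> Sf fs; exists f => // k; exists (sl k) => //.
have slk := has_slope_slopes Sf (fs k).
rewrite /slope_vec inordK ?rank_below_slopes //.
by apply: kth_rank_below; rewrite ?undup_uniq // => t; apply: slopeset_slopes.
Qed.

Lemma slope_vec_lt k sl sl' : sl k \in slopes k -> sl' k \in slopes k ->
  sl k < sl' k -> (slope_vec sl k < slope_vec sl' k)%N.
Proof.
move=> slk slk' lt; rewrite /slope_vec !inordK ?rank_below_slopes //.
by apply: rank_below_lt; rewrite ?undup_uniq.
Qed.

Lemma kink_at_divisor_point f a (ps : 'I_r -> gpt G) k h :
  agree f (tcomb g a) -> 0 < h -> h < eps -> ray_pt p (eta k) h \notin l ->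
  (exists t, ps t = ray_pt p (eta k) h) ->
  (forall q, valid q -> exists2 K, div_at f q K & (mult ps q)%:Z <= D q + K) ->
  exists lo, kink_along a f k h lo.
Proof.
move=> ag h0 h1 notl [t Et] fdiv.
have hr : h < reach p (eta k) by apply: lt_le_trans (eps_reach k).
have [K fK] := fdiv _ (ray_pt_valid vp (tdp k) h0 hr).
have -> : D (ray_pt p (eta k) h) = 0.
  by apply/eqP; apply: contraNT notl; apply: D_supp; apply: ray_pt_valid hr.
rewrite add0r => multK.
apply: (kink_tcomb vp (tdp k) (eps_reach k) (linear_g k) ag h0 h1 fK).
apply: le_trans multK; rewrite lez_nat.
by rewrite /mult (bigD1 t) //= Et eqxx.
Qed.

Lemma kinks_of_points i j ri rj (x y : nat -> R) : (ri + rj)%N = r ->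
  (forall k, (k < ri)%N -> 0 < x k < eps /\ ray_pt p (eta i) (x k) \notin l) ->
  (forall k, (k < rj)%N -> 0 < y k < eps /\ ray_pt p (eta j) (y k) \notin l) ->
  exists f a (loi loj : nat -> 'I_n.+1), [/\ S f, agree f (tcomb g a),
    forall k, (k < ri)%N -> kink_along a f i (x k) (loi k) &
    forall k, (k < rj)%N -> kink_along a f j (y k) (loj k)].
Proof.
move=> rirj hx hy.
pose ps (t : 'I_r) := if (t < ri)%N then ray_pt p (eta i) (x t)
                      else ray_pt p (eta j) (y (t - ri)%N).
have valid_ps t : valid (ps t).
  rewrite /ps; case: ifP => tri.
    have [/andP [x0 x1] _] := hx _ tri.
    by apply: (ray_pt_valid vp (tdp i) x0); apply: lt_le_trans x1 _.
  have /hy [/andP [y0 y1] _] : (t - ri < rj)%N by have := ltn_ord t; lia.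
  by apply: (ray_pt_valid vp (tdp j) y0); apply: lt_le_trans y1 _.
have [f Sf fdiv] := S_rank valid_ps.
have [a ag] := (Sg f).1 Sf.
have [loi Hloi] : exists loi : nat -> 'I_n.+1, forall k, (k < ri)%N ->
    kink_along a f i (x k) (loi k).
  apply: (bounded_choice (P := fun k => kink _ _ (along p f (eta i)) (x k)) ord0).
  move=> k kri; have [/andP [x0 x1] xl] := hx k kri.
  apply: kink_at_divisor_point ag x0 x1 xl _ fdiv.
  have kr : (k < r)%N by rewrite -rirj ltn_addr.
  by exists (Ordinal kr); rewrite /ps /= kri.
have [loj Hloj] : exists loj : nat -> 'I_n.+1, forall k, (k < rj)%N ->
    kink_along a f j (y k) (loj k).
  apply: (bounded_choice (P := fun k => kink _ _ (along p f (eta j)) (y k)) ord0).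
  move=> k krj; have [/andP [y0 y1] yl] := hy k krj.
  apply: kink_at_divisor_point ag y0 y1 yl _ fdiv.
  have kr : (ri + k < r)%N by rewrite -rirj ltn_add2l.
  by exists (Ordinal kr); rewrite /ps /= ltnNge leq_addr /= addKn.
by exists f, a, loi, loj.
Qed.

Lemma kink_chain_slope_vec k N (x : nat -> R) a f (lo : nat -> 'I_n.+1) m0 sl :
  agree f (tcomb g a) -> active_along a f k 0 m0 ->
  sg k m0 = sl k ->
  (forall t, (t < N)%N -> 0 < x t < eps) -> (forall t t', (t < t')%N -> x t' < x t) ->
  (forall t, (t < N)%N -> kink_along a f k (x t) (lo t)) ->
  (forall t t' : 'I_N, (t < t')%N ->
     (slope_vec (fun k' => sg k' (lo t)) k < slope_vec (fun k' => sg k' (lo t')) k)%N) /\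
  (forall t : 'I_N, (slope_vec (fun k' => sg k' (lo t)) k < slope_vec sl k)%N).
Proof.
move=> ag A0 Tm0 xb x_decr kinks; have env := tcomb_envelope_eta k ag.
split=> [t t' tt'|t]; apply: slope_vec_lt => /=;
  rewrite -?Tm0 ?mem_slopes // -(ltr_int R).
  have /andP [x0 _] := xb _ (ltn_ord t'); have /andP [_ x1] := xb _ (ltn_ord t).
  by have := kink_slope_lt env (ltW x0) (x_decr _ _ tt') x1 (kinks _ (ltn_ord t')).1
    (kinks _ (ltn_ord t)).
have /andP [x0 x1] := xb _ (ltn_ord t).
by have := kink_slope_lt env (lexx 0) x0 x1 A0 (kinks _ (ltn_ord t)).
Qed.

Lemma local_array_P2' : P2' (local_array S r p eta).
Proof.
(* The argument does not use [i != j]. *)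
move=> i j _ ri rj rirj.
have [di di0 avoid_i] := ray_avoids p l (eta i).
have [dj dj0 avoid_j] := ray_avoids p l (eta j).
pose C := \sum_m `|(sg i m)%:~R : R|.
have C_ge m : `|(sg i m)%:~R : R| <= C.
  by rewrite /C (bigD1 m) //= ler_wpDr // sumr_ge0.
have C0 : 0 <= C := le_trans (normr_ge0 _) (C_ge ord0).
have ex0 : 0 < Order.min eps di by rewrite lt_min eps_gt0 di0.
have ey0 : 0 < Order.min eps dj by rewrite lt_min eps_gt0 dj0.
have [x [y [hx hy x_decr y_decr xy]]] := sample_points rj C0 ex0 ey0.
have x_ok k : (k < ri)%N -> 0 < x k < eps /\ ray_pt p (eta i) (x k) \notin l.
  have /andP [x0] := hx k; rewrite lt_min => /andP [x1 x2].
  by rewrite x0 x1; split=> //; apply: avoid_i.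
have y_ok k : (k < rj)%N -> 0 < y k < eps /\ ray_pt p (eta j) (y k) \notin l.
  have /andP [y0] := hy k; rewrite lt_min => /andP [y1 y2].
  by rewrite y0 y1; split=> //; apply: avoid_j.
have [f [a [loi [loj [Sf ag Ki Kj]]]]] := kinks_of_points rirj x_ok y_ok.
have [sl fsl] := choice (fun k => in_RD_slope (S_RD Sf) vp (tdp k)).
have [mi [A0i Smi]] := active_at_p ag (fsl i).
have [mj [A0j Smj]] := active_at_p ag (fsl j).
exists (slope_vec sl), (fun k => slope_vec (fun t => sg t (loi k))),
  (fun k => slope_vec (fun t => sg t (loj k))); split.
- split; first exact: slope_vec_local_array Sf fsl.
  by split=> k; apply: slope_vec_local_array (gS _) (slope_g ^~ _).
- exact: kink_chain_slope_vec ag A0i Smi (fun t tri => (x_ok t tri).1) x_decr Ki.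
- exact: kink_chain_slope_vec ag A0j Smj (fun t trj => (y_ok t trj).1) y_decr Kj.
move=> k k'; apply: slope_vec_lt => /=; rewrite ?mem_slopes // -(ltr_int R).
have [/andP [x0 x1] _] := x_ok _ (ltn_ord k').
have [/andP [y0 y1] _] := y_ok _ (ltn_ord k).
by have := kink_cross (tcomb_envelope_eta i ag) (tcomb_envelope_eta j ag) C_ge
  (ltW x0) x1 y0 y1 (xy _ _ (ltn_ord k)) A0i (Ki _ (ltn_ord k')).1 (Kj _ (ltn_ord k)).
Qed.

End LocalArray.

Lemma linear_radius (R : realType) (G : mgraph R) (p : gpt G) (d n : nat)
    (eta : 'I_d -> dir G) (g : 'I_n.+1 -> tfun G) (sg : 'I_d -> 'I_n.+1 -> int) :
  valid p -> (forall k, tdir p (eta k)) ->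
  (forall k m, has_slope (g m) p (eta k) (sg k m)) ->
  exists eps : R, [/\ 0 < eps, forall k, eps <= reach p (eta k) &
    forall k m h, 0 < h -> h < eps ->
      along p (g m) (eta k) h = g m p + (sg k m)%:~R * h].
Proof.
move=> vp tdp slope_g.
have [eps e0 Heps] : exists2 eps : R, 0 < eps & forall km : 'I_d * 'I_n.+1,
    eps <= reach p (eta km.1) /\ forall h, 0 < h -> h < eps ->
      along p (g km.2) (eta km.1) h = g km.2 p + (sg km.1 km.2)%:~R * h.
  apply: uniform_radius => [[k m]|[k m] e e' /= [le_e lin] e'0 e'e].
    have [e e0 lin] := has_slope_along vp (tdp k) (slope_g k m).
    exists (Order.min e (reach p (eta k))); first by rewrite lt_min e0 reach_gt0.
    split=> [|h h0]; first by rewrite ge_min lexx orbT.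
    by rewrite lt_min => /andP [h1 _]; apply: lin.
  split=> [|h h0 h1]; first exact: le_trans le_e.
  by apply: lin => //; apply: lt_le_trans e'e.
exists eps; split=> // [k|k m]; first exact: (Heps (k, ord0)).1.
exact: (Heps (k, m)).2.
Qed.

Theorem mainTheorem11 (R : realType) (G : mgraph R)
    (D : divisor G) (S : tfun G -> Prop) (r : nat)
    (p : gpt G) (d : nat) (eta : 'I_d -> dir G) :
  tls D S r ->
  valid p ->
  (2 <= d)%N ->
  injective eta ->
  (forall i, tdir p (eta i)) ->
  (forall e, tdir p e -> exists i, eta i = e) ->
  P2' (local_array S r p eta).
Proof.
move=> [[l D_supp] [n [g [gS Sg]]] S_RD S_rank S_dep] vp _ _ tdp _.
have [sg slope_g] := choice (fun km : 'I_d * 'I_n.+1 =>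
  in_RD_slope (S_RD _ (gS km.2)) vp (tdp km.1)).
have {}slope_g k m : has_slope (g m) p (eta k) (sg (k, m)) := slope_g (k, m).
have [eps [eps_gt0 eps_reach linear_g]] := linear_radius vp tdp slope_g.
exact: local_array_P2' vp tdp D_supp gS Sg S_RD S_rank S_dep slope_g eps_gt0
  eps_reach linear_g.
Qed.
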